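(* Let $\Theta$ be a bunch in a projected cone $(E \xrightarrow{Q} K, \gamma)$. Then for any two faces $\gamma_1, \gamma_2 \in \mathrm{cov}(\Theta)$ we have $Q(\gamma_1)^{\circ} \cap Q(\gamma_2)^{\circ} \neq \emptyset$.
   Context: A lattice is a finitely generated free abelian group; for a lattice $E$ put $E_{\mathbb Q} := \mathbb Q \otimes_{\mathbb Z} E$, and a lattice homomorphism is extended $\mathbb Q$-linearly. A cone in $E$ means a convex polyhedral (not necessarily strictly convex) cone in $E_{\mathbb Q}$; $\tau^{\circ}$ denotes the relative interior of a cone $\tau$, $\gamma_0 \preceq \gamma$ means $\gamma_0$ is a face of $\gamma$, and $\mathrm{lin}(\tau)$ is the linear span. A projected cone $(E \xrightarrow{Q} K, \gamma)$ consists of a surjective homomorphism of lattices $Q\colon E \to K$ and a simplicial cone $\gamma \subset E_{\mathbb Q}$ of full dimension. A projected face is a cone $Q(\gamma_0) \subset K_{\mathbb Q}$ with $\gamma_0 \preceq \gamma$. A bunch in $(E \xrightarrow{Q} K,\gamma)$ is a nonempty collection $\Theta$ of projected faces such that a projected face $\tau_0$ belongs to $\Theta$ if and only if $\emptyset \neq \tau_0^{\circ} \cap \tau^{\circ} \neq \tau^{\circ}$ holds for all $\tau \in \Theta$ with $\tau \neq \tau_0$. The covering collection $\mathrm{cov}(\Theta)$ is the set of faces $\gamma_0 \preceq \gamma$ which are minimal (among faces of $\gamma$, with respect to inclusion) with the property that $Q(\gamma_0) \supseteq \tau$ for some $\tau \in \Theta$. *)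

From HB Require Import structures.
From mathcomp Require Import all_boot all_order all_algebra.
From mathcomp Require Import classical_sets.
Set Implicit Arguments. Unset Strict Implicit. Unset Printing Implicit Defensive.
Import Order.TTheory GRing.Theory Num.Theory.
Local Open Scope ring_scope.
Local Open Scope classical_set_scope.

(* Lattices are modelled as Z^n = 'cV[int]_n, and E_Q as Q^n = 'cV[rat]_n. *)

Definition Qmap (r n : nat) (Q : 'M[int]_(r, n)) : 'cV[rat]_n -> 'cV[rat]_r :=
  fun x => map_mx (fun z : int => z%:~R) Q *m x.

Definition lattice_surj (r n : nat) (Q : 'M[int]_(r, n)) : Prop :=
  forall y : 'cV[int]_r, exists x : 'cV[int]_n, Q *m x = y.

Definition cone_gen (n k : nat) (V : 'M[rat]_(n, k)) : set 'cV[rat]_n :=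
  [set x | exists a : 'cV[rat]_k, (forall i, 0 <= a i 0) /\ x = V *m a].

Definition lin (n : nat) (C : set 'cV[rat]_n) : set 'cV[rat]_n :=
  [set y | exists k (W : 'M[rat]_(n, k)) (c : 'cV[rat]_k),
     (forall j, C (col j W)) /\ y = W *m c].

(* Relative interior of a convex set C containing 0 (interior relative to
   its linear span = affine hull), in the algebraic form. *)
Definition relint (n : nat) (C : set 'cV[rat]_n) : set 'cV[rat]_n :=
  [set x | C x /\ forall y, lin C y -> exists e : rat, 0 < e /\ C (x + e *: y)].

Definition face (n : nat) (C F : set 'cV[rat]_n) : Prop :=
  exists u : 'rV[rat]_n, (forall x, C x -> 0 <= (u *m x) 0 0) /\
    F = [set x | C x /\ (u *m x) 0 0 = 0].

Definition simplicial_full (n : nat) (g : set 'cV[rat]_n) : Prop :=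
  exists V : 'M[rat]_n, V \in unitmx /\ g = cone_gen V.

Definition projected_cone (r n : nat) (Q : 'M[int]_(r, n)) (g : set 'cV[rat]_n) : Prop :=
  lattice_surj Q /\ simplicial_full g.

Definition projected_face (r n : nat) (Q : 'M[int]_(r, n)) (g : set 'cV[rat]_n)
    (t : set 'cV[rat]_r) : Prop :=
  exists g0, face g g0 /\ t = Qmap Q @` g0.

Definition bunch (r n : nat) (Q : 'M[int]_(r, n)) (g : set 'cV[rat]_n)
    (Theta : set (set 'cV[rat]_r)) : Prop :=
  (exists t, Theta t) /\
  (forall t, Theta t -> projected_face Q g t) /\
  (forall t0, projected_face Q g t0 ->
     (Theta t0 <-> forall t, Theta t -> t <> t0 ->
        (relint t0 `&` relint t !=set0) /\ (relint t0 `&` relint t <> relint t))).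

Definition cov (r n : nat) (Q : 'M[int]_(r, n)) (g : set 'cV[rat]_n)
    (Theta : set (set 'cV[rat]_r)) : set (set 'cV[rat]_n) :=
  [set g0 | face g g0 /\ (exists t, Theta t /\ t `<=` Qmap Q @` g0) /\
     forall g1, face g g1 -> g1 `<=` g0 ->
       (exists t, Theta t /\ t `<=` Qmap Q @` g1) -> g1 = g0].

From HB Require Import structures.
From mathcomp Require Import all_boot all_order all_algebra.
From mathcomp Require Import classical_sets.
From mathcomp Require Import ring lra.
From mathcomp Require Import boolp.
Set Implicit Arguments. Unset Strict Implicit. Unset Printing Implicit Defensive.
Import Order.TTheory GRing.Theory Num.Theory.
Local Open Scope ring_scope.
Local Open Scope classical_set_scope.

(* Since gamma is simplicial, its faces are the cones on subsets S of its
   generators, and Q(gamma_S) is the cone on the images of these generators.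
   If gamma_S is in cov(Theta) through tau in Theta, minimality says that tau
   leaves every Q(gamma_(S - i)); a point of the relative interior of tau can
   then be moved inside tau in a direction leaving Q(gamma_(S - i)), which
   gives it a representation with positive i-th coefficient.  Averaging over
   i in S, it is a strictly positive combination of the generators Q(v_i),
   i in S, hence lies in the relative interior of Q(gamma_S).  Two members of
   a bunch have meeting relative interiors, and a common point of them works
   for both covering faces. *)

Definition subcone (m n : nat) (M : 'M[rat]_(m, n)) (S : 'I_n -> bool) :
    set 'cV[rat]_m :=
  [set x | exists a : 'cV[rat]_n, (forall i, 0 <= a i 0) /\
     (forall i, ~~ S i -> a i 0 = 0) /\ x = M *m a].

Lemma finite_small_enough (I : finType) (P : I -> rat -> Prop) :
  (forall i e e', 0 < e' <= e -> P i e -> P i e') ->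
  (forall i, exists2 e, 0 < e & P i e) -> exists2 e, 0 < e & forall i, P i e.
Proof.
move=> P_down P_ex.
suff [e e_gt0 Pe] : exists2 e, 0 < e & forall i, i \in enum I -> P i e.
  by exists e => // i; apply: Pe; rewrite mem_enum.
elim: (enum I) => [|j s [e e_gt0 Pe]]; first by exists 1.
have [ej ej_gt0 Pj] := P_ex j.
have min_gt0 : 0 < Num.min e ej by rewrite lt_min e_gt0 ej_gt0.
exists (Num.min e ej) => // i; rewrite inE => /orP[/eqP -> | i_s].
  by apply: P_down Pj; rewrite min_gt0 ge_min lexx orbT.
by apply: P_down (Pe i i_s); rewrite min_gt0 ge_min lexx.
Qed.

Section Subcone.
Variables (m n : nat) (M : 'M[rat]_(m, n)).

Lemma subcone_sub (S S' : 'I_n -> bool) :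
  (forall j, S' j -> S j) -> subcone M S' `<=` subcone M S.
Proof.
move=> S'S x [a [a_ge0 [a_supp ->]]]; exists a; split => //; split => // j Sj.
by apply: a_supp; apply: contra Sj; apply: S'S.
Qed.

Lemma lin_subcone (S : 'I_n -> bool) y : lin (subcone M S) y ->
  exists2 c : 'cV[rat]_n, (forall i, ~~ S i -> c i 0 = 0) & y = M *m c.
Proof.
case=> k [W [c [W_sub ->]]].
have /fin_all_exists [f f_spec] : forall j : 'I_k, exists a : 'cV[rat]_n,
    (forall i, ~~ S i -> a i 0 = 0) /\ col j W = M *m a.
  by move=> j; have [a [_ ?]] := W_sub j; exists a.
pose A := \matrix_(i, j) f j i 0.
have -> : W = M *m A.
  apply/matrixP => i j; have [_ /(congr1 (fun z : 'cV[rat]_m => z i 0))] := f_spec j.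
  by rewrite !mxE => ->; apply: eq_bigr => l _; rewrite mxE.
exists (A *m c); last by rewrite mulmxA.
by move=> i Si; rewrite mxE big1 // => j _; rewrite mxE (proj1 (f_spec j)) ?mul0r.
Qed.

Lemma relint_subcone_pos (S : 'I_n -> bool) (a : 'cV[rat]_n) :
  (forall i, S i -> 0 < a i 0) -> (forall i, ~~ S i -> a i 0 = 0) ->
  relint (subcone M S) (M *m a).
Proof.
move=> a_gt0 a_supp.
have a_ge0 i : 0 <= a i 0.
  by case Si: (S i); [exact: ltW (a_gt0 _ Si) | rewrite a_supp ?Si].
split; first by exists a.
move=> y /lin_subcone [c c_supp ->].
pose P i e := 0 <= a i 0 + e * c i 0.
have P_down i e e' : 0 < e' <= e -> P i e -> P i e'.
  by rewrite /P => /andP[e'_gt0 e'_le]; have := a_ge0 i; nra.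
have P_ex i : exists2 e, 0 < e & P i e.
  rewrite /P; have := a_ge0 i; case: (lerP 0 (c i 0)) => [c_ge0 | c_lt0] ai.
    by exists 1 => //; lra.
  have ai_gt0 : 0 < a i 0.
    case Si: (S i); first exact: a_gt0.
    by move: c_lt0; rewrite c_supp ?Si // ltxx.
  exists (a i 0 / - c i 0); first by rewrite divr_gt0 // oppr_gt0.
  suff -> : a i 0 / - c i 0 * c i 0 = - a i 0 by rewrite subrr.
  by field; rewrite lt_eqF.
have [e e_gt0 Pe] := finite_small_enough P_down P_ex.
exists e; split => //; exists (a + e *: c); split.
  by move=> i; rewrite !mxE; exact: Pe.
split; first by move=> i Si; rewrite !mxE a_supp // c_supp // mulr0 addr0.
by rewrite mulmxDr -scalemxAr.
Qed.

Lemma relint_subcone_neq0 (S : 'I_n -> bool) : relint (subcone M S) !=set0.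
Proof.
exists (M *m \col_j (if S j then 1 else 0)).
by apply: relint_subcone_pos => j; rewrite mxE; case: (S j).
Qed.

Section RelintMinimal.
Variables (S : 'I_n -> bool) (t : set 'cV[rat]_m) (x : 'cV[rat]_m).
Hypotheses (t_sub : t `<=` subcone M S) (t_x : relint t x).

(* Pick y in t outside subcone M (S - i); then x - e y lies in t for a small
   e > 0, and x = e y + (x - e y) inherits the positive i-th coefficient of y. *)
Lemma relint_coef_gt0 i : S i ->
  ~ (t `<=` subcone M (fun j => S j && (j != i))) ->
  exists a : 'cV[rat]_n, [/\ forall j, 0 <= a j 0, forall j, ~~ S j -> a j 0 = 0,
    x = M *m a & 0 < a i 0].
Proof.
move=> Si /existsNP[y /not_implyP[t_y y_out]].
have lin_y : lin t (- y).
  exists 1%N, y, (const_mx (-1)); split.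
    by move=> j; suff -> : col j y = y by []; apply/matrixP => p q; rewrite !mxE !ord1.
  by apply/matrixP => p q; rewrite !mxE big_ord1 !mxE !ord1; lra.
have [e [e_gt0 /t_sub [c [c_ge0 [c_supp c_def]]]]] := (proj2 t_x) _ lin_y.
have [b [b_ge0 [b_supp b_def]]] := t_sub t_y.
have bi_gt0 : 0 < b i 0.
  rewrite lt_def b_ge0 andbT; apply/negP => /eqP bi0; apply: y_out.
  exists b; split => //; split => // j.
  by rewrite negb_and negbK => /orP[/b_supp | /eqP ->].
exists (e *: b + c); split.
- by move=> j; rewrite !mxE addr_ge0 // mulr_ge0 // ltW.
- by move=> j Sj; rewrite !mxE b_supp // c_supp // mulr0 addr0.
- rewrite mulmxDr -scalemxAr -b_def -c_def.
  by apply/matrixP => p q; rewrite !mxE; lra.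
- by rewrite !mxE; have := c_ge0 i; nra.
Qed.

(* Representations of x form a convex set, so midpoints combine
   positivity at the various coordinates. *)
Lemma relint_subcone_min :
  (forall i, S i -> ~ (t `<=` subcone M (fun j => S j && (j != i)))) ->
  exists a : 'cV[rat]_n, [/\ forall i, S i -> 0 < a i 0,
    forall i, ~~ S i -> a i 0 = 0 & x = M *m a].
Proof.
move=> t_min.
have /fin_all_exists [D D_spec] : forall i, exists d : 'cV[rat]_n,
    [/\ forall j, 0 <= d j 0, forall j, ~~ S j -> d j 0 = 0,
        x = M *m d & S i -> 0 < d i 0].
  move=> i; case Si: (S i); first by have [d [? ? ? ?]] := relint_coef_gt0 Si (t_min i Si); exists d.
  by have [d [d_ge0 [d_supp ->]]] := t_sub (proj1 t_x); exists d.
suff [a [_ a_supp a_def a_gt0]] : exists a : 'cV[rat]_n,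
    [/\ forall j, 0 <= a j 0, forall j, ~~ S j -> a j 0 = 0, x = M *m a &
        forall i, i \in enum 'I_n -> S i -> 0 < a i 0].
  by exists a; split => // i; apply: a_gt0; rewrite mem_enum.
elim: (enum 'I_n) => [|j s [a [a_ge0 a_supp a_def a_gt0]]].
  by have [a [a_ge0 [a_supp ->]]] := t_sub (proj1 t_x); exists a.
have [d_ge0 d_supp d_def d_gt0] := D_spec j.
exists (2^-1 *: (a + D j)); split.
- by move=> k; rewrite !mxE; have := a_ge0 k; have := d_ge0 k; lra.
- by move=> k Sk; rewrite !mxE a_supp // d_supp // addr0 mulr0.
- rewrite -scalemxAr mulmxDr -a_def -d_def.
  by apply/matrixP => p q; rewrite !mxE; lra.
- move=> i; rewrite inE => /orP[/eqP -> | i_s] Si; rewrite !mxE.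
    by have := a_ge0 j; have := d_gt0 Si; lra.
  by have := a_gt0 i i_s Si; have := d_ge0 i; lra.
Qed.

End RelintMinimal.

End Subcone.

Section SimplicialCone.
Variables (n : nat) (V : 'M[rat]_n).

Lemma face_cone_gen F : face (cone_gen V) F -> exists S, F = subcone V S.
Proof.
case=> u [u_ge0 ->].
pose c := u *m V.
have c_ge0 j : 0 <= c 0 j.
  have gen_j : cone_gen V (V *m delta_mx j 0).
    by exists (delta_mx j 0); split => // i; rewrite mxE; case: (_ && _).
  by have := u_ge0 _ gen_j; rewrite mulmxA -colE mxE.
exists (fun j => c 0 j == 0); apply/seteqP; split => x.
  case=> -[a [a_ge0 ->]] ux0; exists a; split => //; split => // j cj.
  move: ux0; rewrite mulmxA mxE => /psumr_eq0P/(_ j isT)/eqP.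
  by rewrite mulf_eq0 (negbTE cj) => /(_ (fun i _ => mulr_ge0 (c_ge0 i) (a_ge0 i)))/eqP.
case=> a [a_ge0 [a_supp ->]]; split; first by exists a.
rewrite mulmxA mxE big1 // => j _.
by case cj: (c 0 j == 0); [rewrite (eqP cj) mul0r | rewrite a_supp ?cj // mulr0].
Qed.

Hypothesis V_unit : V \in unitmx.

Lemma subcone_face (S : 'I_n -> bool) : face (cone_gen V) (subcone V S).
Proof.
pose w j : rat := if S j then 0 else 1.
have uV (a : 'cV[rat]_n) :
    (\row_j w j *m invmx V *m (V *m a)) 0 0 = \sum_j w j * a j 0.
  by rewrite mulmxA mulmxKV // mxE; apply: eq_bigr => j _; rewrite mxE.
have w_ge0 (a : 'cV[rat]_n) j : 0 <= a j 0 -> 0 <= w j * a j 0.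
  by rewrite /w; case: (S j); rewrite ?mul0r ?mul1r.
exists (\row_j w j *m invmx V); split.
  by case=> x [a [a_ge0 ->]]; rewrite uV sumr_ge0 // => j _; apply: w_ge0.
apply/seteqP; split => x.
  case=> a [a_ge0 [a_supp ->]]; split; first by exists a.
  by rewrite uV big1 // => j _; rewrite /w; case Sj: (S j); rewrite ?mul0r ?a_supp ?Sj ?mulr0.
case=> -[a [a_ge0 ->]]; rewrite uV => /psumr_eq0P w0.
exists a; split => //; split => // j Sj.
by have := w0 (fun i _ => w_ge0 a i (a_ge0 i)) j isT; rewrite /w (negbTE Sj) mul1r.
Qed.

Lemma col_subcone (S : 'I_n -> bool) i : subcone V S (col i V) -> S i.
Proof.
case=> a [_ [a_supp]]; rewrite colE => /(congr1 (mulmx (invmx V))).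
rewrite !mulKmx // => a_def; apply: contraT => /a_supp/eqP.
by rewrite -a_def mxE !eqxx oner_eq0.
Qed.

End SimplicialCone.

Definition ratmx r n (Q : 'M[int]_(r, n)) : 'M[rat]_(r, n) :=
  map_mx (fun z : int => z%:~R) Q.

Lemma Qmap_subcone r n (Q : 'M[int]_(r, n)) (V : 'M[rat]_n) S :
  Qmap Q @` subcone V S = subcone (ratmx Q *m V) S.
Proof.
apply/seteqP; split => y.
  by case=> x [a [a_ge0 [a_supp ->]]] <-; exists a; rewrite /Qmap mulmxA.
case=> a [a_ge0 [a_supp ->]]; exists (V *m a); first by exists a.
by rewrite /Qmap mulmxA.
Qed.

Lemma cov_subcone r n (Q : 'M[int]_(r, n)) (V : 'M[rat]_n) Theta g0 :
  V \in unitmx -> cov Q (cone_gen V) Theta g0 ->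
  exists S, g0 = subcone V S /\ exists t, [/\ Theta t,
    t `<=` subcone (ratmx Q *m V) S &
    forall i, S i -> ~ (t `<=` subcone (ratmx Q *m V) (fun j => S j && (j != i)))].
Proof.
move=> V_unit [g0_face [[t [Theta_t t_sub]] g0_min]].
have [S g0_def] := face_cone_gen g0_face; subst g0.
exists S; split => //; exists t; split => //; first by rewrite -Qmap_subcone.
move=> i Si t_sub'.
have sub_S : subcone V (fun j => S j && (j != i)) `<=` subcone V S.
  by apply: subcone_sub => j /andP[].
have := g0_min _ (subcone_face V_unit _) sub_S.
rewrite Qmap_subcone => /(_ (ex_intro _ t (conj Theta_t t_sub'))) eqS.
suff /(col_subcone V_unit) : subcone V (fun j => S j && (j != i)) (col i V).
  by rewrite eqxx andbF.
rewrite eqS; exists (delta_mx i 0); rewrite -colE; split; [|split] => // j; rewrite mxE.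
  by case: (_ && _).
by case: eqP => [-> | //]; rewrite Si.
Qed.

Lemma bunch_relint_meet r n (Q : 'M[int]_(r, n)) g Theta t1 t2 :
  simplicial_full g -> bunch Q g Theta -> Theta t1 -> Theta t2 ->
  relint t1 `&` relint t2 !=set0.
Proof.
move=> [V [_ ->]] [_ [Theta_pf Theta_bunch]] Theta_t1 Theta_t2.
have [<- | t12] := pselect (t1 = t2).
  have [g0 [g0_face ->]] := Theta_pf t1 Theta_t1.
  have [S ->] := face_cone_gen g0_face.
  by rewrite setIid Qmap_subcone; apply: relint_subcone_neq0.
have t1_pf := Theta_pf t1 Theta_t1.
by have [] := (proj1 (Theta_bunch t1 t1_pf) Theta_t1) t2 Theta_t2 (nesym t12).
Qed.

Theorem lemma2p5 (r n : nat) (Q : 'M[int]_(r, n)) (g : set 'cV[rat]_n)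
    (Theta : set (set 'cV[rat]_r)) :
  projected_cone Q g -> bunch Q g Theta ->
  forall g1 g2, cov Q g Theta g1 -> cov Q g Theta g2 ->
    relint (Qmap Q @` g1) `&` relint (Qmap Q @` g2) !=set0.
Proof.
move=> [_ g_simpl] Theta_bunch g1 g2.
have [V [V_unit g_def]] := g_simpl; rewrite g_def => cov1 cov2.
have [S1 [-> [t1 [Theta_t1 t1_sub t1_min]]]] := cov_subcone V_unit cov1.
have [S2 [-> [t2 [Theta_t2 t2_sub t2_min]]]] := cov_subcone V_unit cov2.
have [x [x_t1 x_t2]] := bunch_relint_meet g_simpl Theta_bunch Theta_t1 Theta_t2.
exists x; rewrite !Qmap_subcone; split.
  by have [a [a_gt0 a_supp ->]] := relint_subcone_min t1_sub x_t1 t1_min;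
     exact: relint_subcone_pos.
by have [a [a_gt0 a_supp ->]] := relint_subcone_min t2_sub x_t2 t2_min;
   exact: relint_subcone_pos.
Qed.
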